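(* None of the following pairs of consecutive patterns is reciprocal: $(\underline{2010},\underline{2120})$, $(\underline{1000},\underline{1110})$, $(\underline{2100},\underline{2210})$. Here two consecutive patterns $p,q$ are reciprocal if for every $n\ge1$ and all $S,T\subseteq[n]$, $$|\{\epsilon\in I_n:\operatorname{Em}(p,\epsilon)=S,\ \operatorname{Em}(q,\epsilon)=T\}|=|\{\epsilon\in I_n:\operatorname{Em}(p,\epsilon)=T,\ \operatorname{Em}(q,\epsilon)=S\}|.$$
   Context: An inversion sequence of length $n$ is an integer sequence $\epsilon=\epsilon_1\cdots\epsilon_n$ with $0\le\epsilon_i<i$ for all $i$; $I_n$ denotes the set of them. The reduction of an integer word is obtained by replacing every occurrence of its $k$-th smallest distinct value by $k-1$. A consecutive pattern $p=\underline{p_1\cdots p_r}$ occurs in a sequence $\epsilon$ at position $i$ if the reduction of $\epsilon_i\cdots\epsilon_{i+r-1}$ equals $p_1\cdots p_r$. $\operatorname{Em}(p,\epsilon)$ is the set of positions at which $p$ occurs in $\epsilon$. *)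

From mathcomp Require Import all_boot.
Set Implicit Arguments. Unset Strict Implicit. Unset Printing Implicit Defensive.

Definition reduction (w : seq nat) : seq nat :=
  map (fun x => index x (sort leq (undup w))) w.

(* An element e : n.-tuple 'I_n is read with
   0-based indices: the entry at index i (position i+1) must be < i+1.
   (Values are automatically < n since e_i < i <= n.) *)
Definition is_invseq (n : nat) (e : n.-tuple 'I_n) : bool :=
  [forall i : 'I_n, (tnth e i : nat) <= i].

Definition Iseq (n : nat) : {set n.-tuple 'I_n} := [set e | is_invseq e].

(* Em p e: the set of positions at which the consecutive pattern p occurs.
   Position i+1 in [n] is encoded by the index i : 'I_n. *)
Definition Em (p : seq nat) (n : nat) (e : n.-tuple 'I_n) : {set 'I_n} :=
  [set i : 'I_n | (i + size p <= n)
     && (reduction (take (size p) (drop i (map (@nat_of_ord n) e))) == p)].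

Definition reciprocal (p q : seq nat) : Prop :=
  forall n : nat, 1 <= n -> forall S T : {set 'I_n},
    #|[set e in Iseq n | (Em p e == S) && (Em q e == T)]| =
    #|[set e in Iseq n | (Em p e == T) && (Em q e == S)]|.

From mathcomp Require Import all_boot.
Set Implicit Arguments. Unset Strict Implicit. Unset Printing Implicit Defensive.

(* Reciprocity already fails for S = {3} and T = {} (index 2 below: positions
   are 0-based), at n = 8 for (2010, 2120) and at n = 7 for the other two
   pairs; e.g. 112 inversion sequences of length 8 have 2010 exactly at
   position 3 and no 2120, against 110 the other way round.  The counts are
   computed by listing the inversion sequences as sequences of naturals, on
   which "Em p e = S" becomes a boolean test. *)

Definition is_inv_seq (n : nat) (s : seq nat) : bool :=
  (size s == n) && all (fun i => nth 0 s i <= i) (iota 0 n).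

Fixpoint inv_seqs (n : nat) : seq (seq nat) :=
  if n is n'.+1 then [seq rcons s j | s <- inv_seqs n', j <- iota 0 n] else [:: [::]].

Lemma is_inv_seq_rcons n s j : is_inv_seq n.+1 (rcons s j) = is_inv_seq n s && (j <= n).
Proof.
rewrite /is_inv_seq size_rcons eqSS.
have [Hs|] := eqVneq (size s) n; last by [].
rewrite -addn1 iotaD all_cat /= add0n nth_rcons Hs ltnn eqxx andbT.
congr (_ && _); apply: eq_in_all => i; rewrite mem_iota add0n => /andP[_ Hi].
by rewrite nth_rcons Hs Hi.
Qed.

Lemma inv_seqsS n :
  inv_seqs n.+1 = [seq rcons s j | s <- inv_seqs n, j <- iota 0 n.+1].
Proof. by []. Qed.

Lemma mem_inv_seqs n s : (s \in inv_seqs n) = is_inv_seq n s.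
Proof.
elim: n s => [|n IH] s; first by case: s.
rewrite inv_seqsS; case/lastP: s => [|s j].
  by apply/allpairsP => -[[t k] [_ _ /(congr1 size)]]; rewrite size_rcons.
rewrite is_inv_seq_rcons -IH; apply/allpairsP/andP => [[[t k] [Ht Hk]]|[Hs Hj]].
  by case/rcons_inj=> -> ->; rewrite mem_iota in Hk.
by exists (s, j); split; rewrite // mem_iota.
Qed.

Lemma uniq_inv_seqs n : uniq (inv_seqs n).
Proof.
elim: n => [|n IH] //; rewrite inv_seqsS.
apply: allpairs_uniq => //; first exact: iota_uniq.
by move=> [s1 j1] [s2 j2] _ _ /rcons_inj [-> ->].
Qed.

Lemma is_invseqE n (e : n.-tuple 'I_n) :
  is_invseq e = is_inv_seq n (map (@nat_of_ord n) e).
Proof.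
rewrite /is_inv_seq size_map size_tuple eqxx -val_enum_ord all_map.
apply/forallP/allP => /= He i => [_|]; have := He i;
  by rewrite (nth_map i) ?size_tuple // -tnth_nth; apply; rewrite ?mem_enum.
Qed.

(* The default [i] of [insubd] is never used on an inversion sequence. *)
Definition ord_tuple n (s : seq nat) : n.-tuple 'I_n :=
  [tuple insubd i (nth 0 s i) | i < n].

Lemma ord_tupleK n s : is_inv_seq n s -> map (@nat_of_ord n) (ord_tuple n s) = s.
Proof.
case/andP => /eqP s_n /allP s_le.
apply: (@eq_from_nth _ 0); rewrite size_map size_tuple ?s_n // => i lt_in.
rewrite (nth_map (Ordinal lt_in)) ?size_tuple // -[i]/(val (Ordinal lt_in)) -tnth_nth.
by rewrite tnth_mktuple val_insubd /= (leq_ltn_trans (s_le i _)) // mem_iota add0n lt_in.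
Qed.

Lemma card_Iseq n (P : pred (seq nat)) :
  #|[set e in Iseq n | P (map (@nat_of_ord n) e)]| = count P (inv_seqs n).
Proof.
rewrite cardE -(size_map (fun e : n.-tuple _ => map (@nat_of_ord n) e)) -size_filter.
apply/perm_size/uniq_perm.
- by rewrite map_inj_uniq ?enum_uniq // => e1 e2 /(inj_map val_inj) /val_inj.
- by rewrite filter_uniq ?uniq_inv_seqs.
move=> s; rewrite mem_filter mem_inv_seqs; apply/mapP/andP => [[e]|[Ps s_inv]].
  by rewrite mem_enum !inE is_invseqE => /andP[e_inv Pe] ->.
exists (ord_tuple n s); last by rewrite ord_tupleK.
by rewrite mem_enum !inE is_invseqE ord_tupleK ?Ps ?s_inv.
Qed.

Definition occurs_at (p s : seq nat) (i : nat) : bool :=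
  (i + size p <= size s) && (reduction (take (size p) (drop i s)) == p).

Definition occurs_exactly_at (p S s : seq nat) : bool :=
  all (fun i => occurs_at p s i == (i \in S)) (iota 0 (size s)).

Lemma Em_eq_set p S n (e : n.-tuple 'I_n) :
  (Em p e == [set i : 'I_n | nat_of_ord i \in S]) =
  occurs_exactly_at p S (map (@nat_of_ord n) e).
Proof.
rewrite /occurs_exactly_at /occurs_at size_map size_tuple -val_enum_ord all_map.
apply/eqP/allP => [/setP Em_S i _|Em_S]; first by have := Em_S i; rewrite !inE => ->.
by apply/setP => i; rewrite !inE; apply/eqP/Em_S; rewrite mem_enum.
Qed.

Definition joint_count n (p q S T : seq nat) : nat :=
  count (fun s => occurs_exactly_at p S s && occurs_exactly_at q T s) (inv_seqs n).

Lemma card_Em_eq_set n p q S T :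
  #|[set e in Iseq n | (Em p e == [set i : 'I_n | nat_of_ord i \in S])
                    && (Em q e == [set i : 'I_n | nat_of_ord i \in T])]|
  = joint_count n p q S T.
Proof.
by rewrite /joint_count -card_Iseq; apply: eq_card => e; rewrite !inE !Em_eq_set.
Qed.

Lemma joint_counts_not_reciprocal n p q S T a b :
  joint_count n p q S T = a /\ joint_count n p q T S = b -> 0 < n -> a != b ->
  ~ reciprocal p q.
Proof.
move=> [<- <-] n_gt0 + pq_rec.
by rewrite -!card_Em_eq_set (pq_rec _ n_gt0) eqxx.
Qed.

Lemma joint_counts_2010_2120 :
  joint_count 8 [:: 2; 0; 1; 0] [:: 2; 1; 2; 0] [:: 2] [::] = 112 /\
  joint_count 8 [:: 2; 0; 1; 0] [:: 2; 1; 2; 0] [::] [:: 2] = 110.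
Proof. by split; vm_compute. Qed.

Lemma joint_counts_1000_1110 :
  joint_count 7 [:: 1; 0; 0; 0] [:: 1; 1; 1; 0] [:: 2] [::] = 40 /\
  joint_count 7 [:: 1; 0; 0; 0] [:: 1; 1; 1; 0] [::] [:: 2] = 42.
Proof. by split; vm_compute. Qed.

Lemma joint_counts_2100_2210 :
  joint_count 7 [:: 2; 1; 0; 0] [:: 2; 2; 1; 0] [:: 2] [::] = 14 /\
  joint_count 7 [:: 2; 1; 0; 0] [:: 2; 2; 1; 0] [::] [:: 2] = 12.
Proof. by split; vm_compute. Qed.

Theorem mainTheorem3 :
  ~ reciprocal [:: 2; 0; 1; 0] [:: 2; 1; 2; 0] /\
  ~ reciprocal [:: 1; 0; 0; 0] [:: 1; 1; 1; 0] /\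
  ~ reciprocal [:: 2; 1; 0; 0] [:: 2; 2; 1; 0].
Proof.
split; [|split].
- exact: joint_counts_not_reciprocal joint_counts_2010_2120 isT isT.
- exact: joint_counts_not_reciprocal joint_counts_1000_1110 isT isT.
- exact: joint_counts_not_reciprocal joint_counts_2100_2210 isT isT.
Qed.
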